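(* For any term $t$, any scalars $\alpha,\beta$, any type $T$ and any context $\Gamma$ of the Scalar type system: if $\Gamma\vdash\alpha.(\beta.t):T$ then $\Gamma\vdash(\alpha\times\beta).t:T$.
   Context: Fix a commutative ring $(\mathcal{S},+,\times)$. Terms: $t,r ::= b \mid (t)\,r \mid \mathbf{0} \mid \alpha.t \mid t+r$, basis terms $b ::= x \mid \lambda x\,t$, modulo associativity and commutativity of $+$. Types: $T ::= U \mid \forall X.T \mid \alpha.T \mid \overline{0}$; unit types: $U ::= X \mid U\to T \mid \forall X.U$. Type variables are only substituted by unit types; $(\alpha.T)[U/X]=\alpha.T[U/X]$. Type equivalence $\equiv$ is the least congruence with $\alpha.\overline0\equiv\overline0$, $0.T\equiv\overline0$, $1.T\equiv T$, $\alpha.(\beta.T)\equiv(\alpha\times\beta).T$, $\forall X.\alpha.T\equiv\alpha.\forall X.T$. A context is a set of distinct term variables with unit types. Typing rules: (ax) $\Gamma,x:U\vdash x:U$; ($\equiv$) from $\Gamma\vdash t:T$ and $T\equiv S$ infer $\Gamma\vdash t:S$; ($\to_E$) from $\Gamma\vdash t:\alpha.(U\to T)$ and $\Gamma\vdash r:\beta.U$ infer $\Gamma\vdash (t)\,r:(\alpha\times\beta).T$; ($\to_I$) from $\Gamma,x:U\vdash t:T$ infer $\Gamma\vdash\lambda x\,t:U\to T$; ($\forall_E$) from $\Gamma\vdash t:\forall X.T$ infer $\Gamma\vdash t:T[U/X]$, $U$ unit; ($\forall_I$) from $\Gamma\vdash t:T$ with $X$ not free in $\Gamma$ infer $\Gamma\vdash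 t:\forall X.T$; ($ax_{\overline0}$) $\Gamma\vdash\mathbf 0:\overline0$; ($+_I$) from $\Gamma\vdash t:\alpha.T$ and $\Gamma\vdash r:\beta.T$ infer $\Gamma\vdash t+r:(\alpha+\beta).T$; ($s_I$) from $\Gamma\vdash t:T$ infer $\Gamma\vdash\alpha.t:\alpha.T$. *)

From mathcomp Require Import all_boot all_algebra.
Set Implicit Arguments. Unset Strict Implicit. Unset Printing Implicit Defensive.
Import GRing.Theory.
Local Open Scope ring_scope.

Section Scalar.
Variable S : comPzRingType.

(* Terms: b ::= x | \lam x t ; t ::= b | (t) r | 0 | a.t | t + r.
   Term variables are de Bruijn indices (terms are taken up to alpha). *)
Inductive term : Type :=
| Var  of nat
| Lam  of term
| App  of term & term
| Zero
| Scal of S & term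
| Plus of term & term.

(* Terms are considered modulo associativity and commutativity of +:
   ac_eq is the least congruence generated by these two laws. *)
Inductive ac_eq : term -> term -> Prop :=
| ac_refl t : ac_eq t t
| ac_sym t r : ac_eq t r -> ac_eq r t
| ac_trans t r s : ac_eq t r -> ac_eq r s -> ac_eq t s
| ac_comm t r : ac_eq (Plus t r) (Plus r t)
| ac_assoc t r s : ac_eq (Plus (Plus t r) s) (Plus t (Plus r s))
| ac_lam t t' : ac_eq t t' -> ac_eq (Lam t) (Lam t')
| ac_app t t' r r' : ac_eq t t' -> ac_eq r r' -> ac_eq (App t r) (App t' r')
| ac_scal a t t' : ac_eq t t' -> ac_eq (Scal a t) (Scal a t')
| ac_plus t t' r r' : ac_eq t t' -> ac_eq r r' -> ac_eq (Plus t r) (Plus t' r').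

(* Raw type syntax; type variables are de Bruijn indices (TAll binds index 0). *)
Inductive ty : Type :=
| TVar  of nat
| TArr  of ty & ty
| TAll  of ty
| TScal of S & ty
| TZero.

Inductive is_unit : ty -> Prop :=
| u_var n : is_unit (TVar n)
| u_arr U T : is_unit U -> is_type T -> is_unit (TArr U T)
| u_all U : is_unit U -> is_unit (TAll U)
with is_type : ty -> Prop :=
| t_unit U : is_unit U -> is_type U
| t_all T : is_type T -> is_type (TAll T)
| t_scal a T : is_type T -> is_type (TScal a T)
| t_zero : is_type TZero.

Fixpoint tshift (c : nat) (T : ty) : ty :=
  match T with
  | TVar n => if (c <= n)%N then TVar n.+1 else TVar n
  | TArr A B => TArr (tshift c A) (tshift c B)
  | TAll A => TAll (tshift c.+1 A)
  | TScal a A => TScal a (tshift c A)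
  | TZero => TZero
  end.

(* capture-avoiding substitution T[U/k] (removing the binder k) *)
Fixpoint tsubst (k : nat) (U : ty) (T : ty) : ty :=
  match T with
  | TVar n => if n == k then U else if (k < n)%N then TVar n.-1 else TVar n
  | TArr A B => TArr (tsubst k U A) (tsubst k U B)
  | TAll A => TAll (tsubst k.+1 (tshift 0 U) A)
  | TScal a A => TScal a (tsubst k U A)
  | TZero => TZero
  end.

Inductive tequiv : ty -> ty -> Prop :=
| te_refl T : is_type T -> tequiv T T
| te_sym T R : tequiv T R -> tequiv R T
| te_trans T R Q : tequiv T R -> tequiv R Q -> tequiv T Q
| te_scal0 a : tequiv (TScal a TZero) TZero
| te_zero T : is_type T -> tequiv (TScal 0 T) TZero
| te_one T : is_type T -> tequiv (TScal 1 T) T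
| te_mul a b T : is_type T -> tequiv (TScal a (TScal b T)) (TScal (a * b) T)
| te_allscal a T : is_type T -> tequiv (TAll (TScal a T)) (TScal a (TAll T))
| te_arr U U' T T' : is_unit U -> is_unit U' -> tequiv U U' -> tequiv T T' ->
    tequiv (TArr U T) (TArr U' T')
| te_all T T' : tequiv T T' -> tequiv (TAll T) (TAll T')
| te_scalc a T T' : tequiv T T' -> tequiv (TScal a T) (TScal a T').

(* Contexts: lists of (unit) types, de Bruijn; Gamma, x:U is U :: Gamma. *)
Definition ctx := seq ty.

Inductive typing : ctx -> term -> ty -> Prop :=
| ty_ax G n U : onth G n = Some U -> typing G (Var n) U
| ty_equiv G t T R : typing G t T -> tequiv T R -> typing G t R
| ty_arrE G t r a b U T :
    typing G t (TScal a (TArr U T)) -> typing G r (TScal b U) ->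
    typing G (App t r) (TScal (a * b) T)
| ty_arrI G t U T : is_unit U -> typing (U :: G) t T -> typing G (Lam t) (TArr U T)
| ty_allE G t T U : typing G t (TAll T) -> is_unit U -> typing G t (tsubst 0 U T)
| ty_allI G t T : typing (map (tshift 0) G) t T -> typing G t (TAll T)
      (* de Bruijn form of "X not free in Gamma" *)
| ty_ax0 G : typing G Zero TZero
| ty_plusI G t r a b T :
    typing G t (TScal a T) -> typing G r (TScal b T) ->
    typing G (Plus t r) (TScal (a + b) T)
| ty_sI G t a T : typing G t T -> typing G (Scal a t) (TScal a T)
| ty_ac G t t' T : typing G t T -> ac_eq t t' -> typing G t' T
      .

Fixpoint ctx_ok (G : ctx) : Prop := if G is U :: G' then is_unit U /\ ctx_ok G' else True.

End Scalar.

From mathcomp Require Import all_boot all_algebra.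

Set Implicit Arguments.
Unset Strict Implicit.
Unset Printing Implicit Defensive.

(* Modulo AC, only (s_I) builds a scalar-headed term; the other rules that
   can end a derivation of a.(b.t) (equiv, forall_E, forall_I, AC) commute
   with pushing a inside, so G |- b.t : T yields G |- (a*b).t : a.T through
   a.(b.T) == (a*b).T and forall X.a.T == a.forall X.T.  The side conditions
   of these equivalences hold because every derivable type is well formed. *)

Scheme is_unit_mut := Induction for is_unit Sort Prop
  with is_type_mut := Induction for is_type Sort Prop.

Section Scalar.
Variable S : comPzRingType.
Implicit Types (G : ctx S) (t u : term S) (T U : ty S) (a b : S).

Lemma is_type_TScal a T : is_type (TScal a T) -> is_type T.
Proof. by move=> HT; inversion HT as [U HU| | |]; [inversion HU|]. Qed.

Lemma is_type_TAll T : is_type (TAll T) -> is_type T.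
Proof. by move=> HT; inversion HT as [U HU| | |]; [inversion HU; apply: t_unit|]. Qed.

Lemma is_type_TArr U T : is_type (TArr U T) -> is_unit U /\ is_type T.
Proof. by move=> HT; inversion HT as [V HV| | |]; inversion HV. Qed.

Lemma wf_tshift :
  (forall U, is_unit U -> forall c, is_unit (tshift c U)) /\
  (forall T, is_type T -> forall c, is_type (tshift c T)).
Proof.
pose P U (_ : is_unit U) := forall c, is_unit (tshift c U).
pose Q T (_ : is_type T) := forall c, is_type (tshift c T).
split; [apply: (@is_unit_mut S P Q) | apply: (@is_type_mut S P Q)];
  rewrite /P /Q /= => *; try case: ifP; by constructor; auto.
Qed.

Lemma wf_tsubst :
  (forall T, is_unit T -> forall k U, is_unit U -> is_unit (tsubst k U T)) /\
  (forall T, is_type T -> forall k U, is_unit U -> is_type (tsubst k U T)).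
Proof.
pose P T (_ : is_unit T) := forall k U, is_unit U -> is_unit (tsubst k U T).
pose Q T (_ : is_type T) := forall k U, is_unit U -> is_type (tsubst k U T).
have unit_shift := wf_tshift.1.
split; [apply: (@is_unit_mut S P Q) | apply: (@is_type_mut S P Q)];
  rewrite /P /Q /= => *; try (case: eqP => //; case: ifP); by constructor; auto.
Qed.

Lemma tequiv_is_type T R : tequiv T R -> is_type T /\ is_type R.
Proof.
elim=> {T R}; try by move=> *; split; auto using t_all, t_scal, t_zero.
- by move=> T R _ [].
- by move=> T R Q _ [HT _] _ [_ HQ].
- by move=> U U' T T' HU HU' _ _ _ [HT HT']; split; apply/t_unit/u_arr.
- by move=> T T' _ [HT HT']; split; apply: t_all.
- by move=> a T T' _ [HT HT']; split; apply: t_scal.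
Qed.

Lemma ctx_ok_tshift G : ctx_ok G -> ctx_ok (map (tshift 0) G).
Proof. by elim: G => //= U G IH [HU HG]; split; [apply: wf_tshift.1 | apply: IH]. Qed.

Lemma ctx_ok_onth G n U : ctx_ok G -> onth G n = Some U -> is_unit U.
Proof. by elim: G n => [|V G IH] [|n] //= [HV HG]; [case=> <- | apply: IH]. Qed.

Lemma typing_is_type G t T : typing G t T -> ctx_ok G -> is_type T.
Proof.
elim=> {G t T}.
- by move=> G n U HU HG; exact: t_unit (ctx_ok_onth HG HU).
- by move=> G t T R _ _ /tequiv_is_type[].
- move=> G t r a b U T _ IHt _ _ HG; apply: t_scal.
  by case/is_type_TArr: (is_type_TScal (IHt HG)).
- by move=> G t U T HU _ IHt HG; apply/t_unit/u_arr/IHt.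
- by move=> G t T U _ IHt HU HG; apply: wf_tsubst.2 HU; apply/is_type_TAll/IHt.
- by move=> G t T _ IHt HG; apply/t_all/IHt/ctx_ok_tshift.
- by move=> *; apply: t_zero.
- by move=> G t r a b T _ IHt _ _ HG; apply/t_scal/(is_type_TScal (IHt HG)).
- by move=> G t a T _ IHt HG; apply/t_scal/IHt.
- by move=> G t t' T _ IHt _ /IHt.
Qed.

Lemma ac_eq_Scal t u : ac_eq t u ->
  (forall a t', t = Scal a t' -> exists2 u', u = Scal a u' & ac_eq t' u') /\
  (forall a u', u = Scal a u' -> exists2 t', t = Scal a t' & ac_eq t' u').
Proof.
elim=> {t u} //.
- by move=> t; split=> a t' ->; exists t' => //; apply: ac_refl.
- move=> t u _ [IHl IHr]; split=> a t'.
  + by case/IHr=> u' ->; exists u' => //; apply: ac_sym.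
  + by case/IHl=> u' ->; exists u' => //; apply: ac_sym.
- move=> t u v _ [IHtu IHut] _ [IHuv IHvu]; split=> a t'.
  + case/IHtu=> u' /IHuv[v' -> Hu'v'] Ht'u'; exists v' => //; exact: ac_trans Ht'u' Hu'v'.
  + case/IHvu=> u' /IHut[t'' -> Ht''u'] Hu't'; exists t'' => //; exact: ac_trans Ht''u' Hu't'.
- by move=> a t t' Htt'; split=> b _ [<- <-]; [exists t' | exists t].
Qed.

Lemma ac_eq_ScalL a t u : ac_eq (Scal a t) u -> exists2 u', u = Scal a u' & ac_eq t u'.
Proof. by move/ac_eq_Scal => [+ _]; apply. Qed.

Lemma typing_Scal_scale G u T : typing G u T -> ctx_ok G ->
  forall a b t, ac_eq (Scal b t) u -> typing G (Scal (a * b) t) (TScal a T).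
Proof.
elim=> {G u T};
  try by move=> *; match goal with H : ac_eq (Scal _ _) _ |- _ => case/ac_eq_ScalL: H end.
- by move=> G t T R _ IHt HTR HG a b t0 /(IHt HG a)/ty_equiv; apply; apply: te_scalc.
- move=> G t T U Ht IHt HU HG a b t0 /(IHt HG a) Ht0.
  have HT := is_type_TAll (typing_is_type Ht HG).
  exact: ty_allE (ty_equiv Ht0 (te_sym (te_allscal a HT))) HU.
- move=> G t T Ht IHt HG a b t0 Ht0.
  have HG' := ctx_ok_tshift HG.
  exact: ty_equiv (ty_allI (IHt HG' a b t0 Ht0)) (te_allscal a (typing_is_type Ht HG')).
- move=> G t b T Ht _ HG a b0 t0 /ac_eq_ScalL[u [<- <-] Ht0t].
  apply: ty_equiv (te_sym (te_mul a b (typing_is_type Ht HG))).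
  exact/ty_sI/(ty_ac Ht (ac_sym Ht0t)).
- by move=> G t t' T _ IHt Htt' HG a b t0 /ac_trans/(_ (ac_sym Htt'))/(IHt HG).
Qed.

Lemma typing_Scal_Scal G u T : typing G u T -> ctx_ok G ->
  forall a b t, ac_eq (Scal a (Scal b t)) u -> typing G (Scal (a * b) t) T.
Proof.
elim=> {G u T};
  try by move=> *; match goal with H : ac_eq (Scal _ _) _ |- _ => case/ac_eq_ScalL: H end.
- by move=> G t T R _ IHt HTR HG a b t0 /(IHt HG)/ty_equiv; apply.
- by move=> G t T U _ IHt HU HG a b t0 /(IHt HG)/ty_allE; apply.
- by move=> G t T _ IHt HG a b t0 /(IHt (ctx_ok_tshift HG))/ty_allI.
- by move=> G t a T Ht _ HG a0 b t0 /ac_eq_ScalL[u [<- <-]]; apply: typing_Scal_scale.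
- by move=> G t t' T _ IHt Htt' HG a b t0 /ac_trans/(_ (ac_sym Htt'))/(IHt HG).
Qed.

End Scalar.

Theorem mainTheorem10 (S : comPzRingType) (G : ctx S) (t : term S) (a b : S) (T : ty S) :
  ctx_ok G -> is_type T ->
  typing G (Scal a (Scal b t)) T -> typing G (Scal (a * b)%R t) T.
Proof. by move=> HG _ /typing_Scal_Scal; apply=> //; apply: ac_refl. Qed.
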